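(* Let $m\ge1$ and let $X\subset\sqrt{m}\,\mathbb{S}^{m-1}$ be a spherical $2$-design with $|X|=n$ and degree $S$. For integers $i\ge0$ and $j$ with $i<j\le S$, we have $F_jG^{\circ i}=0$.
   Context: $\sqrt{m}\,\mathbb{S}^{m-1}=\{\bm x\in\mathbb{R}^m:\bm x\cdot\bm x=m\}$. $X$ is a spherical $2$-design if the average over $X$ of every polynomial of degree at most $2$ equals its average over the sphere. $C(X)$: real functions on $X$ with $(f,g)=\frac1n\sum_{\bm x}f(\bm x)g(\bm x)$. $\zeta_{\bm a}(p)(\bm x)=p(\bm a\cdot\bm x)$. $\mathrm{Pol}_0(X)$ = constants, $\mathrm{Pol}_1(X)=\mathrm{Span}\{\zeta_{\bm a}(p):\bm a\in X,\deg p\le1\}$, $\mathrm{Pol}_k(X)=\mathrm{Span}\{fg:f\in\mathrm{Pol}_1(X),g\in\mathrm{Pol}_{k-1}(X)\}$. Degree $S=\min\{i:\mathrm{Pol}_i(X)=C(X)\}$. $\mathrm{Harm}_0=\mathrm{Pol}_0$, $\mathrm{Harm}_k=\mathrm{Pol}_k\cap\mathrm{Pol}_{k-1}^\perp$. Matrices act on $C(X)$ by $(Mf)(\bm x)=\sum_{\bm y}M_{\bm x,\bm y}f(\bm y)$; $F_j$ ($0\le j\le S$) is the matrix of the orthogonal projection onto $\mathrm{Harm}_j(X)$. $G=\frac1n(\bm x\cdot\bm y)_{\bm x,\bm y\in X}$ and $G^{\circ i}$ is its $i$-th entrywise (Hadamard) power. *)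

From HB Require Import structures.
From mathcomp Require Import all_boot all_order all_algebra.
Set Implicit Arguments. Unset Strict Implicit. Unset Printing Implicit Defensive.
Import Order.TTheory GRing.Theory Num.Theory.
Local Open Scope ring_scope.

Section SphericalDesign.
Variables (R : realFieldType) (m n : nat).

Definition dotv (u v : 'rV[R]_m) : R := (u *m v^T) 0 0.

Definition on_sphere (u : 'rV[R]_m) : Prop := dotv u u = m%:R.

(* Average over sqrt(m) S^{m-1} of the general polynomial of degree <= 2,
   p(v) = c + b.v + v A v^T : it equals c + tr A
   (avg of v_i = 0, avg of v_i v_j = delta_ij since avg |v|^2 = m). *)
Definition sphere_avg_deg2 (c : R) (b : 'rV[R]_m) (A : 'M[R]_m) : R :=
  c + \tr A.

Definition poly_deg2 (c : R) (b : 'rV[R]_m) (A : 'M[R]_m) (v : 'rV[R]_m) : R :=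
  c + dotv b v + dotv (v *m A) v.

Variable x : 'I_n -> 'rV[R]_m.

Definition spherical_2design : Prop :=
  forall (c : R) (b : 'rV[R]_m) (A : 'M[R]_m),
    n%:R^-1 * (\sum_(k < n) poly_deg2 c b A (x k)) = sphere_avg_deg2 c b A.

(* C(X) is identified with 'rV[R]_n (f(x_k) = f 0 k); subspaces of C(X)
   are represented by row spaces of matrices (mxalgebra, scope %MS). *)

(* span of all products f g with f in rowspace A, g in rowspace B
   (by bilinearity = span of products of the generating rows) *)
Definition mulsp p q (A : 'M[R]_(p, n)) (B : 'M[R]_(q, n)) : 'M[R]_n :=
  (\sum_(i < p) \sum_(j < q) <<map2_mx *%R (row i A) (row j B)>>)%MS.

(* generators of Pol_1(X): the constant 1 and zeta_a(t) for a in X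
   (zeta_a(alpha + beta t) = alpha + beta (a . x)) *)
Definition gen1 : 'M[R]_(1 + n, n) :=
  col_mx (const_mx 1) (\matrix_(a < n, j < n) dotv (x a) (x j)).

Fixpoint Pol (k : nat) : 'M[R]_n :=
  match k with
  | 0 => <<(const_mx 1 : 'rV[R]_n)>>%MS
  | k'.+1 => match k' with
             | 0 => <<gen1>>%MS
             | _ => mulsp gen1 (Pol k')
             end
  end.

(* orthogonal complement w.r.t. (f,g) = 1/n sum f g (same as for the dot product) *)
Definition perpsp p (A : 'M[R]_(p, n)) : 'M[R]_n := kermx A^T.

Definition Harm (k : nat) : 'M[R]_n :=
  match k with
  | 0 => Pol 0
  | k'.+1 => (Pol k :&: perpsp (Pol k'))%MS
  end.

Definition is_degree (S : nat) : Prop :=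
  (Pol S == 1%:M)%MS /\ forall i, (i < S)%N -> ~ (Pol i == 1%:M)%MS.

(* matrix of the orthogonal projection onto the row space of H, acting on
   column vectors f by (M f)(x) = sum_y M x y f y:  B^T (B B^T)^-1 B with
   B a basis of H *)
Definition orthproj (H : 'M[R]_n) : 'M[R]_n :=
  let B := row_base H in (B^T *m invmx (B *m B^T)) *m B.

Definition F (j : nat) : 'M[R]_n := orthproj (Harm j).

Definition Gram : 'M[R]_n := \matrix_(a < n, b < n) (n%:R^-1 * dotv (x a) (x b)).

Definition hpow (M : 'M[R]_n) (i : nat) : 'M[R]_n := map_mx (fun t => t ^+ i) M.

End SphericalDesign.

From HB Require Import structures.
From mathcomp Require Import all_boot all_order all_algebra.
Import Order.TTheory GRing.Theory Num.Theory.
Set Implicit Arguments. Unset Strict Implicit. Unset Printing Implicit Defensive.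
Local Open Scope ring_scope.

(* Row a of G^{o i} is n^-i times the function y |-> (a . y)^i, a product of
   i generators of Pol_1(X); hence it lies in Pol_i(X).  As G^{o i} is
   symmetric, its columns lie in Pol_i(X) <= Pol_(j-1)(X), which is orthogonal
   to Harm_j(X) and so is annihilated by F_j. *)

Section OrthogonalProjection.
Variables (R : realFieldType) (n : nat).

Lemma orthproj_mul_eq0 (H M : 'M[R]_n) : H *m M = 0 -> orthproj H *m M = 0.
Proof.
move=> HM0; have /submxP [D baseE] : (row_base H <= H)%MS by rewrite eq_row_base.
by rewrite /orthproj /= baseE -!mulmxA HM0 !mulmx0.
Qed.

Lemma perpsp_mul_tr_eq0 p (P : 'M[R]_(p, n)) (H M : 'M[R]_n) :
  (H <= perpsp P)%MS -> (M <= P)%MS -> H *m M^T = 0.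
Proof.
move=> /sub_kermxP HP0 /submxP [D ->].
by rewrite trmx_mul mulmxA HP0 mul0mx.
Qed.

End OrthogonalProjection.

Section PolynomialSpaces.
Variables (R : realFieldType) (m n : nat) (x : 'I_n -> 'rV[R]_m).

Lemma mulsp_mul_diag p q (A : 'M[R]_(p, n)) (B : 'M[R]_(q, n)) (i : 'I_p)
    (v : 'rV[R]_n) :
  (v <= B)%MS -> (v *m diag_mx (row i A) <= mulsp A B)%MS.
Proof.
move=> /submxP [D ->]; rewrite -mulmxA.
apply: submx_trans (submxMl _ _) _; apply/row_subP => j; rewrite row_mul.
have -> : row j B *m diag_mx (row i A) = map2_mx *%R (row i A) (row j B).
  by apply/rowP => k; rewrite mul_mx_diag !mxE mulrC.
by apply: (sumsmx_sup i) => //; apply: (sumsmx_sup j) => //; rewrite genmxE.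
Qed.

Lemma gen1_row_const : row (lshift n (0 : 'I_1)) (gen1 x) = const_mx 1.
Proof. by rewrite rowKu; apply/rowP => k; rewrite !mxE. Qed.

Lemma gen1_row_zeta a : row (rshift 1 a) (gen1 x) = \row_k dotv (x a) (x k).
Proof. by rewrite rowKd; apply/rowP => k; rewrite !mxE. Qed.

Lemma Pol_SS k : Pol x k.+2 = mulsp (gen1 x) (Pol x k.+1).
Proof. by []. Qed.

Lemma Pol_subS k : (Pol x k <= Pol x k.+1)%MS.
Proof.
case: k => [|k]; first by rewrite /= !genmxE -addsmxE addsmxSl.
rewrite Pol_SS; apply/row_subP => j.
have -> : row j (Pol x k.+1) =
    row j (Pol x k.+1) *m diag_mx (row (lshift n (0 : 'I_1)) (gen1 x)).
  by rewrite gen1_row_const diag_const_mx mulmx1.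
exact/mulsp_mul_diag/row_sub.
Qed.

Lemma Pol_sub i j : (i <= j)%N -> (Pol x i <= Pol x j)%MS.
Proof.
move=> /subnK <-; elim: (j - i)%N => [|d IH]; first by rewrite add0n.
exact: submx_trans IH (Pol_subS _).
Qed.

Lemma Gram_tr : (Gram x)^T = Gram x.
Proof.
apply/matrixP => a b; rewrite !mxE /dotv !mxE; congr (_ * _).
by apply: eq_bigr => k _; rewrite !mxE mulrC.
Qed.

Lemma hpow_Gram_tr i : (hpow (Gram x) i)^T = hpow (Gram x) i.
Proof. by rewrite /hpow map_trmx Gram_tr. Qed.

Lemma row_hpow_GramS i a :
  row a (hpow (Gram x) i.+1) =
  n%:R^-1 *: (row a (hpow (Gram x) i) *m diag_mx (row (rshift 1 a) (gen1 x))).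
Proof.
apply/rowP => k; rewrite gen1_row_zeta 2!mxE mul_mx_diag !mxE exprSr.
by rewrite mulrCA.
Qed.

Lemma hpow_Gram_sub_Pol i : (hpow (Gram x) i <= Pol x i)%MS.
Proof.
apply/row_subP => a.
have row_hpow0 : row a (hpow (Gram x) 0) = const_mx 1.
  by apply/rowP => k; rewrite !mxE.
elim: i => [|i IH]; first by rewrite row_hpow0 /= genmxE.
rewrite row_hpow_GramS; apply: scalemx_sub; case: i IH => [_|i IH].
  rewrite row_hpow0; set v := row (rshift 1 a) (gen1 x).
  have -> : const_mx 1 *m diag_mx v = v.
    by apply/rowP => k; rewrite mul_mx_diag !mxE mul1r.
  by rewrite /= genmxE row_sub.
by rewrite Pol_SS; apply: mulsp_mul_diag.
Qed.

End PolynomialSpaces.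

Theorem lemma3p4 (R : realFieldType) (m n : nat) (x : 'I_n -> 'rV[R]_m)
  (S : nat) :
  (1 <= m)%N ->
  injective x ->
  (forall k, on_sphere (x k)) ->
  spherical_2design x ->
  is_degree x S ->
  forall i j : nat, (i < j)%N -> (j <= S)%N ->
    F x j *m hpow (Gram x) i = 0.
Proof.
move=> _ _ _ _ _ i [//|j] lt_ij _.
apply: orthproj_mul_eq0; rewrite -hpow_Gram_tr.
apply: (perpsp_mul_tr_eq0 (P := Pol x j)); first exact: capmxSr.
exact: submx_trans (hpow_Gram_sub_Pol x i) (Pol_sub x (ltnSE lt_ij)).
Qed.
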